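(* Let $m\geq 2$, $\lambda\in\{1,\dots,m\}$, let $\rho:[0,1]\to[0,1]$ be continuous and nondecreasing, and let the threshold collection be $t_k=\rho(k/m)$, $1\le k\le m$ (with $t_0=0$). For any realization $p_1,\dots,p_m\in[0,1]$ of the $p$-values, let $\hat k$ be the step-up-down index of order $\lambda$ defined below, and let $\hat{\mathbb{G}}_m(x)=m^{-1}\sum_{i=1}^m \mathbf{1}\{p_i\le x\}$ be the empirical c.d.f. of the $p$-values. Then $$\mathcal{U}(\lambda/m,\hat{\mathbb{G}}_m)\;\le\; \hat k/m\;\le\;\mathcal{U}\big(\lambda/m,(\hat{\mathbb{G}}_m+m^{-1})\wedge 1\big).$$
   Context: Step-up-down index: order the $p$-values $p_{(1)}\le\dots\le p_{(m)}$ with $p_{(0)}=0$, $t_0=0$. Then $\hat k=\max\{k\in\{\lambda,\dots,m\}: \forall k'\in\{\lambda,\dots,k\},\ p_{(k')}\le t_{k'}\}$ if $p_{(\lambda)}\le t_\lambda$, and $\hat k=\max\{k\in\{0,\dots,\lambda\}: p_{(k)}\le t_k\}$ if $p_{(\lambda)}>t_\lambda$. The step-up-down procedure $\mathrm{SUD}_\lambda(\mathbf t)$ rejects hypothesis $i$ iff $p_i\le t_{\hat k}$. For a nondecreasing $G:[0,1]\to[0,1]$ and $\tau\in[0,1]$, define $\mathcal{U}(\tau,G)=\min\{u\in[\tau,1]: G(\rho(u))\le u\}$ if $G(\rho(\tau))\ge\tau$, and $\mathcal{U}(\tau,G)=\max\{u\in[0,\tau]: G(\rho(u))\ge u\}$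 if $G(\rho(\tau))<\tau$. *)

From Stdlib Require Import Reals Lra List Sorting.Sorted Sorting.Permutation.
Import ListNotations.
Open Scope R_scope.

(* Order statistic p_(k) from the increasingly sorted list q of p-values;
   p_(0) = 0, p_(k) = k-th smallest (1-based). *)
Definition pord (q : list R) (k : nat) : R :=
  match k with O => 0 | S j => nth j q 0 end.

Definition thr (rho : R -> R) (m k : nat) : R :=
  match k with O => 0 | S _ => rho (INR k / INR m) end.

Definition is_sud_index (q : list R) (rho : R -> R) (m lam khat : nat) : Prop :=
  (pord q lam <= thr rho m lam ->
     ((lam <= khat <= m)%nat /\
      (forall k', (lam <= k' <= khat)%nat -> pord q k' <= thr rho m k') /\
      (forall k, (lam <= k <= m)%nat ->
         (forall k', (lam <= k' <= k)%nat -> pord q k' <= thr rho m k') ->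
         (k <= khat)%nat))) /\
  (thr rho m lam < pord q lam ->
     ((khat <= lam)%nat /\ pord q khat <= thr rho m khat /\
      (forall k, (k <= lam)%nat -> pord q k <= thr rho m k -> (k <= khat)%nat))).

Definition ecdf (p : list R) (m : nat) (x : R) : R :=
  INR (length (filter (fun y => if Rle_dec y x then true else false) p)) / INR m.

Definition is_U (rho : R -> R) (tau : R) (G : R -> R) (u : R) : Prop :=
  (G (rho tau) >= tau ->
     tau <= u <= 1 /\ G (rho u) <= u /\
     (forall v, tau <= v <= 1 -> G (rho v) <= v -> u <= v)) /\
  (G (rho tau) < tau ->
     0 <= u <= tau /\ G (rho u) >= u /\
     (forall v, 0 <= v <= tau -> G (rho v) >= v -> v <= u)).

From Stdlib Require Import Reals List Sorting.Sorted Sorting.Permutation.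
From Stdlib Require Import Lra Lia.
Open Scope R_scope.

(* Write F(u) = G_m(rho u) for the empirical c.d.f. G_m, H(u) = min(F(u) + 1/m, 1),
   and say that the grid index k "crosses" when k/m <= F(k/m).  Since the p-values
   are sorted, p_(k) <= t_k holds exactly when at least k p-values lie below
   rho(k/m), i.e. exactly when k crosses; so the step-up-down index khat is read
   off from the crossing indices.  The values U(lam/m, G) exist by completeness of
   R because F and H are nondecreasing with values in [0,1].  The two inequalities then rest on integrality: F only takes values
   in the grid (1/m)N, so
   - a real u with u <= F(u) rounds up to a crossing index k with u <= k/m;
   - a crossing index k with k/m <= u < (k+1)/m forces u < H(u);
   - if k+1 does not cross, then F(k/m) <= k/m. *)

Definition cnt (x : R) (l : list R) : nat :=
  length (filter (fun y => if Rle_dec y x then true else false) l).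

Lemma cnt_cons x a l :
  cnt x (a :: l) = if Rle_dec a x then S (cnt x l) else cnt x l.
Proof. unfold cnt; simpl; destruct (Rle_dec a x); reflexivity. Qed.

Lemma cnt_perm x l l' : Permutation l l' -> cnt x l = cnt x l'.
Proof.
  induction 1.
  - reflexivity.
  - rewrite !cnt_cons, IHPermutation; reflexivity.
  - rewrite !cnt_cons; destruct (Rle_dec x0 x), (Rle_dec y x); reflexivity.
  - congruence.
Qed.

Lemma cnt_len x l : (cnt x l <= length l)%nat.
Proof. apply filter_length_le. Qed.

Lemma cnt_mono x y l : x <= y -> (cnt x l <= cnt y l)%nat.
Proof.
  intro H; induction l as [|a l IH]; [unfold cnt; simpl; lia|].
  rewrite !cnt_cons; destruct (Rle_dec a x), (Rle_dec a y); try lia; lra.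
Qed.

Lemma cnt_below_min a x l : Forall (Rle a) l -> x < a -> cnt x l = 0%nat.
Proof.
  intros Hf Hx; induction Hf as [|b l Hb Hf IH]; [reflexivity|].
  rewrite cnt_cons; destruct (Rle_dec b x); [lra|auto].
Qed.

Lemma sorted_nth_le_iff l : StronglySorted Rle l -> forall k x, (k < length l)%nat ->
  (nth k l 0 <= x <-> (S k <= cnt x l)%nat).
Proof.
  induction 1 as [|a l Hs IH Hall]; intros k x Hk; simpl in Hk; [lia|].
  rewrite cnt_cons; destruct (Rle_dec a x) as [Ha|Ha].
  - destruct k as [|k]; simpl.
    + split; intros; [lia|auto].
    + rewrite IH by lia; lia.
  - rewrite (cnt_below_min a) by (auto; lra). split; intro H; [|lia].
    exfalso. destruct k as [|k]; simpl in H; [lra|].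
    assert (Hin : In (nth k l 0) l) by (apply nth_In; lia).
    rewrite Forall_forall in Hall. specialize (Hall _ Hin). lra.
Qed.

Lemma least_subdiagonal_point (F : R -> R) a b : a <= b ->
  (forall x y, a <= x -> x <= y -> y <= b -> F x <= F y) -> F b <= b ->
  exists u, (a <= u <= b) /\ F u <= u /\
    (forall v, a <= v <= b -> F v <= v -> u <= v).
Proof.
  intros Hab Hmono Hb.
  set (E := fun x => exists v, (a <= v <= b) /\ F v <= v /\ x = - v).
  assert (HE : bound E) by (exists (- a); intros x [v [Hv [_ ->]]]; lra).
  assert (HE2 : exists x, E x) by (exists (- b); exists b; repeat split; lra).
  destruct (completeness E HE HE2) as [M [HM1 HM2]].
  assert (Hlow : forall v, a <= v <= b -> F v <= v -> - M <= v).
  { intros v Hv HF. assert (HEv : E (- v)) by (exists v; auto).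
    specialize (HM1 _ HEv). lra. }
  assert (HMa : M <= - a) by (apply HM2; intros x [v [Hv [_ ->]]]; lra).
  assert (HMb : - b <= M) by (apply HM1; exists b; repeat split; lra).
  exists (- M). split; [lra|]. split; [|exact Hlow].
  assert (M <= - F (- M)); [|lra].
  apply HM2. intros x [v [Hv [HF ->]]].
  assert (F (- M) <= F v) by (apply Hmono; try lra; apply Hlow; auto). lra.
Qed.

Lemma greatest_superdiagonal_point (F : R -> R) a b : a <= b ->
  (forall x y, a <= x -> x <= y -> y <= b -> F x <= F y) -> F a >= a ->
  exists u, (a <= u <= b) /\ F u >= u /\
    (forall v, a <= v <= b -> F v >= v -> v <= u).
Proof.
  intros Hab Hmono Ha.
  set (E := fun v => (a <= v <= b) /\ F v >= v).
  assert (HE : bound E) by (exists b; intros x [Hx _]; lra).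
  assert (HE2 : exists x, E x) by (exists a; split; [lra|auto]).
  destruct (completeness E HE HE2) as [M [HM1 HM2]].
  assert (HaM : a <= M) by (apply HM1; split; [lra|auto]).
  assert (HMb : M <= b) by (apply HM2; intros x [Hx _]; lra).
  exists M. split; [lra|]. split.
  - assert (M <= F M); [|lra].
    apply HM2. intros v [Hv HF].
    assert (v <= M) by (apply HM1; split; auto).
    assert (F v <= F M) by (apply Hmono; lra). lra.
  - intros v Hv HF. apply HM1. split; auto.
Qed.

Lemma is_U_exists (rho G : R -> R) tau : 0 <= tau <= 1 ->
  (forall x, 0 <= x <= 1 -> 0 <= G (rho x) <= 1) ->
  (forall x y, 0 <= x -> x <= y -> y <= 1 -> G (rho x) <= G (rho y)) ->
  exists u, is_U rho tau G u.
Proof.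
  intros Htau Hrange Hmono.
  destruct (Rge_dec (G (rho tau)) tau) as [Hge|Hlt].
  - destruct (least_subdiagonal_point (fun u => G (rho u)) tau 1)
      as [u Hu]; [lra|intros; apply Hmono; lra|apply Hrange; lra|].
    exists u; split; intro; [exact Hu|lra].
  - apply Rnot_ge_lt in Hlt.
    destruct (greatest_superdiagonal_point (fun u => G (rho u)) 0 tau)
      as [u Hu]; [lra|intros; apply Hmono; lra|apply Rle_ge, Hrange; lra|].
    exists u; split; intro; [lra|exact Hu].
Qed.

Definition grid (m k : nat) : R := INR k / INR m.

Section Grid.

Variable m : nat.
Hypothesis Hm : (0 < m)%nat.

Lemma INR_m_pos : 0 < INR m.
Proof. apply lt_0_INR; exact Hm. Qed.

Lemma grid_le a b : grid m a <= grid m b <-> (a <= b)%nat.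
Proof.
  pose proof INR_m_pos as Hpos. unfold grid.
  split; intro Hab.
  - apply INR_le. apply Rmult_le_reg_r with (/ INR m); [apply Rinv_0_lt_compat; lra|exact Hab].
  - apply Rmult_le_compat_r; [left; apply Rinv_0_lt_compat; lra|apply le_INR; exact Hab].
Qed.

Lemma grid_lt a b : grid m a < grid m b <-> (a < b)%nat.
Proof.
  split; intro Hab.
  - destruct (Compare_dec.le_lt_dec b a) as [Hba|]; [|assumption].
    apply grid_le in Hba. lra.
  - destruct (Rlt_le_dec (grid m a) (grid m b)) as [|Hba]; [assumption|].
    apply grid_le in Hba. lia.
Qed.

Lemma grid_zero : grid m 0 = 0.
Proof. unfold grid; simpl; pose proof INR_m_pos; field; lra. Qed.

Lemma grid_succ k : grid m (S k) = grid m k + / INR m.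
Proof. unfold grid; rewrite S_INR; pose proof INR_m_pos; field; lra. Qed.

Lemma grid_nonneg a : 0 <= grid m a.
Proof. rewrite <- grid_zero; apply grid_le; lia. Qed.

Lemma grid_full : grid m m = 1.
Proof. unfold grid; pose proof INR_m_pos; field; lra. Qed.

Lemma grid_le_one a : (a <= m)%nat -> grid m a <= 1.
Proof. intro Ha. rewrite <- grid_full. apply grid_le, Ha. Qed.

Lemma grid_floor n u : 0 <= u < grid m n ->
  exists k, (k < n)%nat /\ grid m k <= u < grid m (S k).
Proof.
  induction n as [|n IH]; intro Hu; [rewrite grid_zero in Hu; lra|].
  destruct (Rlt_le_dec u (grid m n)) as [Hlt|Hge].
  - destruct IH as [k [Hk Hku]]; [lra|]. exists k; split; [lia|exact Hku].
  - exists n; split; [lia|lra].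
Qed.

Lemma grid_ceil n u : 0 <= u <= grid m n ->
  exists k, (k <= n)%nat /\ u <= grid m k < u + / INR m.
Proof.
  pose proof (Rinv_0_lt_compat _ INR_m_pos).
  induction n as [|n IH]; intro Hu.
  - rewrite grid_zero in *. exists 0%nat; rewrite grid_zero; split; [lia|lra].
  - destruct (Rle_dec u (grid m n)) as [Hle|Hgt].
    + destruct IH as [k [Hk Hku]]; [lra|]. exists k; split; [lia|exact Hku].
    + exists (S n); rewrite grid_succ in *; split; [lia|lra].
Qed.

End Grid.

Definition ecdf_plus (p : list R) (m : nat) (x : R) : R :=
  Rmin (ecdf p m x + / INR m) 1.

Definition crosses (rho : R -> R) (p : list R) (m k : nat) : Prop :=
  grid m k <= ecdf p m (rho (grid m k)).

Section EmpiricalCdf.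

Variables (m : nat) (rho : R -> R) (p : list R).
Hypothesis Hm : (0 < m)%nat.
Hypothesis Hrho_mono : forall x y, 0 <= x -> x <= y -> y <= 1 -> rho x <= rho y.
Lemma ecdf_grid x : ecdf p m x = grid m (cnt x p).
Proof. reflexivity. Qed.

Lemma ecdf_rho_mono x y : 0 <= x -> x <= y -> y <= 1 ->
  ecdf p m (rho x) <= ecdf p m (rho y).
Proof.
  intros Hx Hxy Hy. rewrite !ecdf_grid. apply grid_le; [exact Hm|].
  apply cnt_mono, Hrho_mono; assumption.
Qed.

Lemma ecdf_plus_rho_mono x y : 0 <= x -> x <= y -> y <= 1 ->
  ecdf_plus p m (rho x) <= ecdf_plus p m (rho y).
Proof.
  intros Hx Hxy Hy. pose proof (ecdf_rho_mono x y Hx Hxy Hy).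
  unfold ecdf_plus, Rmin; destruct (Rle_dec _ 1), (Rle_dec _ 1); lra.
Qed.

Lemma crosses_iff_cnt k : crosses rho p m k <-> (k <= cnt (rho (grid m k)) p)%nat.
Proof. unfold crosses; rewrite ecdf_grid; apply grid_le, Hm. Qed.

(* If k+1 does not cross then G_m(rho(k/m)) <= k/m: at most k p-values lie
   below rho((k+1)/m), hence below rho(k/m). *)
Lemma below_diag_before_noncrossing k : (k < m)%nat ->
  ~ crosses rho p m (S k) -> ecdf p m (rho (grid m k)) <= grid m k.
Proof.
  intros Hk Hnc. rewrite crosses_iff_cnt in Hnc.
  rewrite ecdf_grid. apply grid_le; [exact Hm|].
  enough (cnt (rho (grid m k)) p <= cnt (rho (grid m (S k))) p)%nat by lia.
  apply cnt_mono, Hrho_mono; [apply grid_nonneg, Hm|apply grid_le; [exact Hm|lia]|].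
  apply grid_le_one; [exact Hm|lia].
Qed.

Lemma superdiagonal_rounds_to_crossing n u : (n <= m)%nat ->
  0 <= u <= grid m n -> u <= ecdf p m (rho u) ->
  exists k, (k <= n)%nat /\ u <= grid m k /\ crosses rho p m k.
Proof.
  intros Hn Hu Hdiag.
  destruct (grid_ceil m Hm n u Hu) as [k [Hk [Huk Hku]]].
  exists k; split; [exact Hk|split; [exact Huk|]].
  assert (Hmono : ecdf p m (rho u) <= ecdf p m (rho (grid m k))).
  { apply ecdf_rho_mono; [lra|exact Huk|apply grid_le_one; [exact Hm|lia]]. }
  apply crosses_iff_cnt.
  enough (k < S (cnt (rho (grid m k)) p))%nat by lia.
  apply (grid_lt m Hm). rewrite (grid_succ m Hm), <- ecdf_grid; lra.
Qed.

Lemma crossing_floor_below_plus k u : crosses rho p m k ->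
  grid m k <= u < grid m (S k) -> u < 1 -> u < ecdf_plus p m (rho u).
Proof.
  intros Hk Hu Hu1.
  assert (Hmono : ecdf p m (rho (grid m k)) <= ecdf p m (rho u))
    by (apply ecdf_rho_mono; [apply grid_nonneg, Hm|lra|lra]).
  unfold crosses in Hk; rewrite (grid_succ m Hm) in Hu.
  apply Rmin_glb_lt; lra.
Qed.

Lemma crossing_below_plus k : (k <= m)%nat -> crosses rho p m k ->
  grid m k <= ecdf_plus p m (rho (grid m k)).
Proof.
  intros Hkm Hk. pose proof (Rinv_0_lt_compat _ (INR_m_pos m Hm)).
  unfold crosses in Hk. apply Rmin_glb; [lra|apply grid_le_one; assumption].
Qed.

Hypothesis Hp_len : length p = m.

Lemma ecdf_bounds x : 0 <= ecdf p m x <= 1.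
Proof.
  rewrite ecdf_grid; split; [apply grid_nonneg, Hm|].
  apply grid_le_one; [exact Hm|]. rewrite <- Hp_len; apply cnt_len.
Qed.

Lemma ecdf_plus_bounds x : 0 <= ecdf_plus p m x <= 1.
Proof.
  pose proof (ecdf_bounds x). pose proof (Rinv_0_lt_compat _ (INR_m_pos m Hm)).
  unfold ecdf_plus, Rmin; destruct (Rle_dec _ 1); lra.
Qed.

End EmpiricalCdf.

Section StepUpDown.

Variables (m lam : nat) (rho : R -> R) (p q : list R) (khat : nat).
Hypothesis Hm : (0 < m)%nat.
Hypothesis Hlam : (1 <= lam <= m)%nat.
Hypothesis Hrho_mono : forall x y, 0 <= x -> x <= y -> y <= 1 -> rho x <= rho y.
Hypothesis Hp_len : length p = m.
Hypothesis Hq_perm : Permutation p q.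
Hypothesis Hq_sorted : Sorted Rle q.
Hypothesis Hkhat : is_sud_index q rho m lam khat.

Lemma sud_test_iff_crosses k : (k <= m)%nat ->
  pord q k <= thr rho m k <-> crosses rho p m k.
Proof.
  intro Hk. destruct k as [|k].
  - unfold crosses. rewrite grid_zero by exact Hm. simpl.
    pose proof (ecdf_bounds m p Hm Hp_len (rho 0)). lra.
  - assert (Hlen : length q = m) by (rewrite <- (Permutation_length Hq_perm); exact Hp_len).
    assert (HSS : StronglySorted Rle q)
      by (apply Sorted_StronglySorted; [intros a b c; apply Rle_trans|exact Hq_sorted]).
    simpl pord; unfold thr; fold (grid m (S k)).
    rewrite sorted_nth_le_iff by (auto; lia).
    rewrite crosses_iff_cnt by exact Hm. rewrite (cnt_perm _ _ _ Hq_perm). tauto.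
Qed.

Lemma sud_index_when_crossing : crosses rho p m lam ->
  (lam <= khat <= m)%nat /\
  (forall k, (lam <= k <= khat)%nat -> crosses rho p m k) /\
  ((khat < m)%nat -> ~ crosses rho p m (S khat)).
Proof.
  intro Hc. apply sud_test_iff_crosses in Hc; [|lia].
  destruct (proj1 Hkhat Hc) as [Hk1 [Hk2 Hk3]].
  split; [exact Hk1|split].
  - intros k Hk. apply sud_test_iff_crosses; [lia|apply Hk2, Hk].
  - intros Hlt Hnext. apply sud_test_iff_crosses in Hnext; [|lia].
    enough (S khat <= khat)%nat by lia.
    apply Hk3; [lia|]. intros k' Hk'.
    destruct (Nat.eq_dec k' (S khat)) as [->|]; [exact Hnext|apply Hk2; lia].
Qed.

Lemma sud_index_when_not_crossing : ~ crosses rho p m lam ->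
  (khat <= lam)%nat /\ crosses rho p m khat /\
  (forall k, (k <= lam)%nat -> crosses rho p m k -> (k <= khat)%nat).
Proof.
  intro Hnc.
  assert (Hgt : thr rho m lam < pord q lam).
  { apply Rnot_le_lt. rewrite sud_test_iff_crosses by lia. exact Hnc. }
  destruct (proj2 Hkhat Hgt) as [Hk1 [Hk2 Hk3]].
  split; [exact Hk1|split].
  - apply sud_test_iff_crosses; [lia|exact Hk2].
  - intros k Hk Hck. apply Hk3; [exact Hk|apply sud_test_iff_crosses; [lia|exact Hck]].
Qed.

Lemma crosses_dec k : {crosses rho p m k} + {~ crosses rho p m k}.
Proof. apply Rle_dec. Qed.

Lemma U_ecdf_le_khat u1 : is_U rho (grid m lam) (ecdf p m) u1 -> u1 <= grid m khat.
Proof.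
  intros [HUge HUlt].
  destruct (crosses_dec lam) as [Hc|Hnc].
  - destruct (sud_index_when_crossing Hc) as [Hk1 [_ Hnext]].
    destruct (HUge (Rle_ge _ _ Hc)) as [_ [_ Hleast]].
    apply Hleast; [split; [apply grid_le|apply grid_le_one]; auto; lia|].
    destruct (Nat.eq_dec khat m) as [->|Hne].
    + pose proof (grid_full m Hm).
      pose proof (ecdf_bounds m p Hm Hp_len (rho (grid m m))). lra.
    + assert (Hk : (khat < m)%nat) by lia.
      exact (below_diag_before_noncrossing m rho p Hm Hrho_mono khat Hk (Hnext Hk)).
  - destruct (sud_index_when_not_crossing Hnc) as [_ [_ Hmax]].
    destruct (HUlt (Rnot_le_lt _ _ Hnc)) as [Hu1 [Hdiag _]].
    destruct (superdiagonal_rounds_to_crossing m rho p Hm Hrho_mono lam u1)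
      as [k [Hk [Huk Hck]]]; [lia|lra|lra|].
    apply Rle_trans with (grid m k); [exact Huk|apply grid_le; [exact Hm|apply Hmax; auto]].
Qed.

Lemma khat_le_U_ecdf_plus u2 :
  is_U rho (grid m lam) (ecdf_plus p m) u2 -> grid m khat <= u2.
Proof.
  intros [HUge HUlt].
  destruct (crosses_dec lam) as [Hc|Hnc].
  - destruct (sud_index_when_crossing Hc) as [Hk1 [Hrun _]].
    assert (Htau : ecdf_plus p m (rho (grid m lam)) >= grid m lam)
      by (apply Rle_ge, crossing_below_plus; auto; lia).
    destruct (HUge Htau) as [Hu2 [Hsub _]].
    destruct (Rle_lt_dec (grid m khat) u2) as [|Hlt]; [assumption|exfalso].
    destruct (grid_floor m Hm khat u2) as [k [Hk Hku]];
      [split; [pose proof (grid_nonneg m Hm lam); lra|exact Hlt]|].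
    assert (Hlk : (lam < S k)%nat) by (apply (grid_lt m Hm); lra).
    assert (Hu2_1 : u2 < 1) by (pose proof (grid_le_one m Hm khat ltac:(lia)); lra).
    pose proof (crossing_floor_below_plus m rho p Hm Hrho_mono k u2
                  (Hrun k ltac:(lia)) Hku Hu2_1).
    lra.
  - destruct (sud_index_when_not_crossing Hnc) as [Hk1 [Hck _]].
    destruct (Rge_dec (ecdf_plus p m (rho (grid m lam))) (grid m lam)) as [Hge|Hlt].
    + destruct (HUge Hge) as [Hu2 _].
      apply Rle_trans with (grid m lam); [apply grid_le; auto|lra].
    + destruct (HUlt (Rnot_ge_lt _ _ Hlt)) as [_ [_ Hmax]].
      apply Hmax; [split; [apply grid_nonneg, Hm|apply grid_le; auto]|].
      apply Rle_ge, crossing_below_plus; auto; lia.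
Qed.

End StepUpDown.

Theorem lemma4p1
  (m lam : nat) (rho : R -> R) (p q : list R) (khat : nat)
  (Hm : (2 <= m)%nat) (Hlam : (1 <= lam <= m)%nat)
  (Hrho_range : forall x, 0 <= x <= 1 -> 0 <= rho x <= 1)
  (Hrho_mono : forall x y, 0 <= x -> x <= y -> y <= 1 -> rho x <= rho y)
  (Hrho_cont : forall x, 0 <= x <= 1 ->
      limit1_in rho (fun y => 0 <= y <= 1) (rho x) x)
  (Hp_len : length p = m)
  (Hp_range : Forall (fun x => 0 <= x <= 1) p)
  (Hq_perm : Permutation p q) (Hq_sorted : Sorted Rle q)
  (Hkhat : is_sud_index q rho m lam khat) :
  exists u1 u2,
    is_U rho (INR lam / INR m) (ecdf p m) u1 /\
    is_U rho (INR lam / INR m) (fun x => Rmin (ecdf p m x + / INR m) 1) u2 /\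
    u1 <= INR khat / INR m <= u2.
Proof.
  assert (Hm0 : (0 < m)%nat) by lia.
  assert (Htau : 0 <= grid m lam <= 1)
    by (split; [apply grid_nonneg|apply grid_le_one]; auto; lia).
  destruct (is_U_exists rho (ecdf p m) (grid m lam) Htau) as [u1 Hu1].
  { intros x _; apply ecdf_bounds; assumption. }
  { apply ecdf_rho_mono; assumption. }
  destruct (is_U_exists rho (ecdf_plus p m) (grid m lam) Htau) as [u2 Hu2].
  { intros x _; apply ecdf_plus_bounds; assumption. }
  { apply ecdf_plus_rho_mono; assumption. }
  exists u1, u2. split; [exact Hu1|split; [exact Hu2|split]].
  - exact (U_ecdf_le_khat m lam rho p q khat Hm0 Hlam Hrho_mono Hp_len
             Hq_perm Hq_sorted Hkhat u1 Hu1).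
  - exact (khat_le_U_ecdf_plus m lam rho p q khat Hm0 Hlam Hrho_mono Hp_len
             Hq_perm Hq_sorted Hkhat u2 Hu2).
Qed.
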